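(* Let $C\subset\mathbb{R}^d$ be an origin-symmetric $d$-polytope and let $\Lambda\subset\mathbb{R}^d$ be a $d$-dimensional lattice, and let $C^\star=\{y: x\cdot y\le1\ \forall x\in C\}$ be the polar body. (1) The width directions of $C$ with respect to $\Lambda$ are exactly the diameter directions of $C^\star$ with respect to $\Lambda^\star$. (2) $C$ is lattice reduced with respect to $\Lambda$ if and only if $C^\star$ is lattice complete with respect to $\Lambda^\star$.
   Context: A lattice $\Lambda\subset\mathbb{R}^d$ is a discrete subgroup spanning $\mathbb{R}^d$; $\Lambda^\star=\{y: x\cdot y\in\mathbb{Z}\ \forall x\in\Lambda\}$ is its dual lattice. For a convex body $K$ (compact convex, non-empty interior) and a lattice $\Gamma$: the lattice width is $\mathrm{wdt}_\Gamma(K)=\min_{y\in\Gamma^\star\setminus\{0\}}\max_{a,b\in K}y\cdot(a-b)$, and width directions are the $y\in\Gamma^\star\setminus\{0\}$ attaining it. A segment $[a,b]$ is a lattice segment w.r.t. $\Gamma$ if $b-a$ is parallel to a nonzero vector of $\Gamma$; its lattice length is $|b-a|/|v|$ with $v$ the generator of $\Gamma\cap\mathrm{span}\{b-a\}$ that is a positive multiple of $b-a$; $\mathrm{diam}_\Gamma(K)$ is the maximal lattice length of a lattice segment in $K$; diameter directions are the $v\in\Gamma\setminus\{0\}$ such that $K$ contains a segment $[a,a+\mathrm{diam}_\Gamma(K)v]$. $K$ is lattice reduced w.r.t. $\Gamma$ if no convex body $K'\subsetneq K$ has the same lattice width; lattice complete if no convex body $K'\supsetneq K$ has the same lattice diameter.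 *)

(* Points of R^d are row vectors 'rV[R]_d,
   R : realType; the topology on 'rV[R]_d is the (product = Euclidean) one
   provided by MathComp-Analysis. *)
From mathcomp Require Import all_boot all_algebra all_classical all_reals all_analysis.
Set Implicit Arguments. Unset Strict Implicit. Unset Printing Implicit Defensive.
Import GRing.Theory Num.Theory numFieldNormedType.Exports.
Local Open Scope ring_scope.
Local Open Scope classical_set_scope.

Section LatticeGeometry.
Variables (R : realType) (d : nat).
Notation vec := 'rV[R]_d.

Definition dot (x y : vec) : R := \sum_(i < d) x 0 i * y 0 i.
Definition enorm (x : vec) : R := Num.sqrt (dot x x).

Definition is_lattice (L : set vec) : Prop :=
  [/\ L 0,
      (forall x y, L x -> L y -> L (x - y)),
      (exists2 e : R, 0 < e & forall x, L x -> ball (0 : vec) e x -> x = 0)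
    & (forall x : vec, exists n (c : 'I_n -> R) (v : 'I_n -> vec),
          (forall i, L (v i)) /\ x = \sum_(i < n) c i *: v i)].

Definition dual (L : set vec) : set vec :=
  [set y | forall x, L x -> dot x y \is a Num.int].

Definition convex_set (K : set vec) : Prop :=
  forall a b (t : R), K a -> K b -> 0 <= t <= 1 -> K ((1 - t) *: a + t *: b).

Definition convex_body (K : set vec) : Prop :=
  [/\ compact K, convex_set K & exists x, K° x].

Definition polytope (C : set vec) : Prop :=
  exists n (v : 'I_n -> vec),
    C = [set x | exists lam : 'I_n -> R,
                  [/\ forall i, 0 <= lam i, \sum_(i < n) lam i = 1
                    & x = \sum_(i < n) lam i *: v i]].

Definition full_polytope (C : set vec) : Prop := polytope C /\ exists x, C° x.

Definition origin_symmetric (C : set vec) : Prop := forall x, C x -> C (- x).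

Definition polar (C : set vec) : set vec := [set y | forall x, C x -> dot x y <= 1].

Definition dir_width (K : set vec) (y : vec) : R :=
  sup [set r | exists a b, [/\ K a, K b & r = dot y (a - b)]].

Definition lattice_width (L K : set vec) : R :=
  inf [set w | exists y, [/\ dual L y, y != 0 & w = dir_width K y]].

Definition width_direction (L K : set vec) (y : vec) : Prop :=
  [/\ dual L y, y != 0 & dir_width K y = lattice_width L K].

Definition seg_in (K : set vec) (a b : vec) : Prop :=
  forall t : R, 0 <= t <= 1 -> K ((1 - t) *: a + t *: b).

Definition lattice_segment (L : set vec) (a b : vec) : Prop :=
  a != b /\ exists v, [/\ L v, v != 0 & exists t : R, b - a = t *: v].

Definition seg_generator (L : set vec) (a b v : vec) : Prop :=
  [/\ L v, (exists s : R, 0 < s /\ v = s *: (b - a))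
    & forall w, L w -> (exists t : R, w = t *: (b - a)) ->
         exists k : int, w = k%:~R *: v].

Definition lattice_length (L : set vec) (a b : vec) (l : R) : Prop :=
  exists v, seg_generator L a b v /\ l = enorm (b - a) / enorm v.

Definition lattice_diam (L K : set vec) : R :=
  sup [set l | exists a b, [/\ seg_in K a b, lattice_segment L a b
                             & lattice_length L a b l]].

Definition diam_direction (L K : set vec) (v : vec) : Prop :=
  [/\ L v, v != 0 & exists a, seg_in K a (a + lattice_diam L K *: v)].

Definition lattice_reduced (L K : set vec) : Prop :=
  ~ exists K', [/\ convex_body K', K' `<=` K, K' != K
                 & lattice_width L K' = lattice_width L K].

Definition lattice_complete (L K : set vec) : Prop :=
  ~ exists K', [/\ convex_body K', K `<=` K', K' != K
                 & lattice_diam L K' = lattice_diam L K].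

End LatticeGeometry.

(* For an origin-symmetric body C the polar is C* = {y | y.(a - b) <= 2 for all a, b in C}, and
   this set, [diff_polar K], makes sense for every convex body K.  The segment [-x, x] lies in
   [diff_polar K] iff the width of K in direction x is at most 2, and every segment [a, b] of
   [diff_polar K] satisfies width(K, b - a) <= 4.  Hence in the direction of a dual lattice vector
   z the longest lattice segments of [diff_polar K] have lattice length 4 / width(K, z), so that
   diam(diff_polar K) = 4 / width(K), with matching extremal directions; this is (1).
   For (2), K |-> diff_polar K reverses inclusions and exchanges the two invariants.  A proper
   width-preserving convex subset of C gives a proper diameter-preserving superset of C*.
   Conversely, a proper diameter-preserving superset K of C* gives, by the bipolar theorem, a
   proper subset diff_polar K of C, and its width is at least 4 / diam(K) = width(C): if
   width(diff_polar K, z) = 4 / s, then s z is either in the closure of K - K, which yields a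
   lattice segment of K longer than diam(K) as soon as s > diam(K), or it is strictly separated
   from K - K, which yields a point of diff_polar K of width larger than 4 / s. *)

From Pilot Require Import Defs.
From mathcomp Require Import all_boot all_order all_algebra all_classical all_reals all_analysis.
From mathcomp Require Import ring lra.
Import Order.TTheory GRing.Theory Num.Theory numFieldNormedType.Exports.
Local Open Scope ring_scope.
Local Open Scope classical_set_scope.
Set Implicit Arguments. Unset Strict Implicit. Unset Printing Implicit Defensive.

Section InnerProduct.
Variables (R : realType) (d : nat).
Notation vec := 'rV[R]_d.
Implicit Types (x y z : vec).

Lemma dotC x y : dot x y = dot y x.
Proof. by apply: eq_bigr => i _; rewrite mulrC. Qed.

Lemma dotDl x y z : dot (x + y) z = dot x z + dot y z.
Proof. by rewrite /dot -big_split; apply: eq_bigr => i _; rewrite mxE mulrDl. Qed.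

Lemma dotZl (c : R) x y : dot (c *: x) y = c * dot x y.
Proof. by rewrite /dot mulr_sumr; apply: eq_bigr => i _; rewrite mxE mulrA. Qed.

Lemma dotNl x y : dot (- x) y = - dot x y.
Proof. by rewrite -scaleN1r dotZl mulN1r. Qed.

Lemma dotBl x y z : dot (x - y) z = dot x z - dot y z.
Proof. by rewrite dotDl dotNl. Qed.

Lemma dot0l x : dot 0 x = 0.
Proof. by rewrite /dot big1 // => i _; rewrite mxE mul0r. Qed.

Lemma dotDr x y z : dot z (x + y) = dot z x + dot z y.
Proof. by rewrite dotC dotDl !(dotC z). Qed.

Lemma dotZr (c : R) x y : dot y (c *: x) = c * dot y x.
Proof. by rewrite dotC dotZl dotC. Qed.

Lemma dotNr x y : dot y (- x) = - dot y x.
Proof. by rewrite dotC dotNl dotC. Qed.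

Lemma dotBr x y z : dot z (x - y) = dot z x - dot z y.
Proof. by rewrite dotDr dotNr. Qed.

Lemma dot0r x : dot x 0 = 0.
Proof. by rewrite dotC dot0l. Qed.

Lemma dotDZ x y (c : R) :
  dot (x + c *: y) (x + c *: y) = dot x x + 2 * c * dot x y + c ^+ 2 * dot y y.
Proof. by rewrite !dotDl !dotDr !dotZl !dotZr (dotC y x); ring. Qed.

Lemma dot_suml n (f : 'I_n -> vec) z : dot (\sum_(i < n) f i) z = \sum_(i < n) dot (f i) z.
Proof.
apply: (big_morph (fun x => dot x z)); first by move=> u v; rewrite dotDl.
exact: dot0l.
Qed.

Lemma dot_delta y j : dot (delta_mx 0 j) y = y 0 j.
Proof.
rewrite /dot (bigD1 j) //= big1 ?addr0; first by rewrite mxE !eqxx mul1r.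
by move=> i /negPf hij; rewrite mxE hij andbF mul0r.
Qed.

Lemma continuous_dotl y : continuous (fun x : vec => dot x y).
Proof.
apply: continuous_big => [|i _ x]; first exact: add_continuous.
by apply: continuousM; [exact: coord_continuous | exact: cst_continuous].
Qed.

(* On ['rV_d] the norm [`|x|] is the maximum of the absolute values of the coordinates. *)
Lemma normr_coord_le x j : `|x 0 j| <= `|x|.
Proof.
rewrite [`|x|]mx_normrE; apply/bigmax_geP; right; by exists (0, j).
Qed.

Lemma norm_le_coord x (M : R) : 0 <= M -> (forall j, `|x 0 j| <= M) -> `|x| <= M.
Proof.
move=> M0 xM; rewrite [`|x|]mx_normrE; apply/bigmax_leP; split => // -[i j] _ /=.
by rewrite (ord1 i).
Qed.

Lemma norm_dot_le x y : `|dot x y| <= d%:R * (`|x| * `|y|).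
Proof.
apply: le_trans (ler_norm_sum _ _ _) _.
have -> : d%:R * (`|x| * `|y|) = \sum_(i < d) `|x| * `|y|.
  by rewrite sumr_const card_ord mulr_natl.
apply: ler_sum => i _.
by rewrite normrM; apply: ler_pM => //; apply: normr_coord_le.
Qed.

Lemma sqr_norm_le_dot x : `|x| ^+ 2 <= dot x x.
Proof.
have dot_ge0 : 0 <= dot x x by apply: sumr_ge0 => i _; rewrite -expr2 sqr_ge0.
have -> : `|x| = mx_norm x by [].
have [->|/mx_norm_neq0[[i j] ->] /=] := eqVneq (mx_norm x) 0; first by rewrite expr0n.
rewrite (ord1 i) /dot (bigD1 j) //= real_normK ?num_real //.
by rewrite expr2 lerDl; apply: sumr_ge0 => k _; rewrite -expr2 sqr_ge0.
Qed.

Lemma dot_gt0 x : x != 0 -> 0 < dot x x.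
Proof.
move=> x0; apply: lt_le_trans (sqr_norm_le_dot x).
by rewrite exprn_gt0 // normr_gt0.
Qed.


Lemma dot_le_sqr_norm x : dot x x <= d%:R * `|x| ^+ 2.
Proof. by rewrite expr2; apply: le_trans (ler_norm _) (norm_dot_le _ _). Qed.

Lemma enormZ (c : R) x : enorm (c *: x) = `|c| * enorm x.
Proof.
by rewrite /enorm dotZl dotZr mulrA -expr2 sqrtrM ?sqr_ge0 // sqrtr_sqr.
Qed.

Lemma enorm_gt0 x : x != 0 -> 0 < enorm x.
Proof. by move=> x0; rewrite sqrtr_gt0 dot_gt0. Qed.

Lemma ballE x e y : ball x e y = (`|x - y| < e).
Proof. by rewrite -ball_normE. Qed.

End InnerProduct.

Section ConvexBody.
Variables (R : realType) (d : nat).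
Notation vec := 'rV[R]_d.
Implicit Types (x y : vec) (K : set vec).

Lemma compact_norm_le K : compact K -> exists M, forall x, K x -> `|x| <= M.
Proof.
move=> /compact_bounded[M [_ KM]]; exists (`|M| + 1) => x Kx.
by apply: KM => //; rewrite (le_lt_trans (ler_norm M)) // ltrDl.
Qed.

Lemma convex_body_norm_le K : convex_body K -> exists M, forall x, K x -> `|x| <= M.
Proof. by case=> /compact_norm_le. Qed.

Lemma convex_body_ball K : convex_body K -> exists x0 (e : R), 0 < e /\ ball x0 e `<=` K.
Proof. by case=> _ _ [x0 /nbhs_ballP[e e0 eK]]; exists x0, e. Qed.

Lemma convex_body_neq0 K : convex_body K -> K !=set0.
Proof. by case/convex_body_ball=> x0 [e [e0 eK]]; exists x0; apply: eK; apply: ballxx. Qed.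

Lemma norm_le_bounded K (M : R) : (forall x, K x -> `|x| <= M) -> bounded_set K.
Proof.
move=> KM; exists M; split; first by rewrite num_real.
by move=> r Mr x Kx; apply: le_trans (KM _ Kx) (ltW Mr).
Qed.

Lemma seg_in_ends K a b : seg_in K a b -> K a /\ K b.
Proof.
move=> Kab; split.
  by have := Kab 0 (ltac:(by rewrite lexx ler01)); rewrite subr0 scale1r scale0r addr0.
by have := Kab 1 (ltac:(by rewrite lexx ler01)); rewrite subrr scale0r add0r scale1r.
Qed.

Lemma convex_body_closed K : convex_body K -> closed K.
Proof. by case=> cK _ _; apply: compact_closed. Qed.

End ConvexBody.

Section DirectionalWidth.
Variables (R : realType) (d : nat).
Notation vec := 'rV[R]_d.
Implicit Types (x y a b : vec).
Variable K : set vec.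
Hypothesis K_body : convex_body K.

Let width_set y := [set r | exists a b, [/\ K a, K b & r = dot y (a - b)]].

Let width_set_ubound y : has_ubound (width_set y).
Proof.
have [M KM] := convex_body_norm_le K_body.
exists (d%:R * (`|y| * (M + M))) => _ [a [b [Ka Kb ->]]].
apply: le_trans (ler_norm _) (le_trans (norm_dot_le _ _) _).
rewrite ler_wpM2l // ler_wpM2l //.
by apply: le_trans (ler_normB _ _) _; apply: lerD; apply: KM.
Qed.

Lemma dir_width_ge y a b : K a -> K b -> dot y (a - b) <= dir_width K y.
Proof. by move=> Ka Kb; apply: (ub_le_sup (width_set_ubound y)); exists a, b. Qed.

Lemma dir_width_le y c :
  (forall a b, K a -> K b -> dot y (a - b) <= c) -> dir_width K y <= c.
Proof.
move=> yc; have [a Ka] := convex_body_neq0 K_body.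
by apply: ge_sup => [|_ [a' [b' [Ka' Kb' ->]]]]; [exists (dot y (a - a)), a, a | apply: yc].
Qed.

Lemma dir_width_gt y c : c < dir_width K y -> exists a b, [/\ K a, K b & c < dot y (a - b)].
Proof.
have [a Ka] := convex_body_neq0 K_body.
move=> /(sup_gt (ex_intro _ (dot y (a - a)) _)) [|_ [a' [b' [Ka' Kb' ->]]] cy].
  by exists a, a.
by exists a', b'.
Qed.

Lemma dir_width_ge0 y : 0 <= dir_width K y.
Proof.
have [a Ka] := convex_body_neq0 K_body.
by apply: le_trans (dir_width_ge y Ka Ka); rewrite subrr dot0r.
Qed.

Lemma dir_widthN y : dir_width K (- y) = dir_width K y.
Proof.
suff le_wN z : dir_width K (- z) <= dir_width K z.
  by apply/eqP; rewrite eq_le le_wN -{1}(opprK y) le_wN.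
apply: dir_width_le => a b Ka Kb.
by rewrite dotNl -dotNr opprB; apply: dir_width_ge.
Qed.

Lemma dir_widthZ (c : R) y : dir_width K (c *: y) = `|c| * dir_width K y.
Proof.
have le_wZ (k : R) z : 0 <= k -> dir_width K (k *: z) <= k * dir_width K z.
  move=> k0; apply: dir_width_le => a b Ka Kb.
  by rewrite dotZl ler_wpM2l // dir_width_ge.
wlog c0 : c y / 0 <= c.
  move=> wlog_c; have [/wlog_c//|c_lt0] := leP 0 c.
  have -> : c *: y = (- c) *: (- y) by rewrite scaleNr scalerN opprK.
  by rewrite wlog_c ?normrN ?dir_widthN // oppr_ge0 ltW.
rewrite ger0_norm //; apply/eqP; rewrite eq_le le_wZ //=.
have [->|c_neq0] := eqVneq c 0; first by rewrite mul0r dir_width_ge0.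
have c_gt0 : 0 < c by rewrite lt_neqAle eq_sym c_neq0.
by rewrite -ler_pdivlMl // -{1}[y](scalerK c_neq0) le_wZ // invr_ge0 ltW.
Qed.

Lemma dir_width_ge_ball x0 e y : 0 < e -> ball x0 e `<=` K -> e * `|y| <= dir_width K y.
Proof.
move=> e0 eK; rewrite mulrC -ler_pdivlMr //.
apply: norm_le_coord => [|j]; first by rewrite divr_ge0 ?dir_width_ge0 ?ltW.
pose w := (e / 2) *: delta_mx (0 : 'I_1) j.
have w_small : `|w| < e.
  have delta_le1 : `|delta_mx (0 : 'I_1) j : vec| <= 1.
    by apply: norm_le_coord => // k; rewrite mxE; case: (k == j); rewrite ?normr1 ?normr0.
  rewrite mx_normZ ger0_norm ?divr_ge0 ?ltW //.
  apply: le_lt_trans (_ : e / 2 * 1 < e); first by rewrite ler_pM2l ?divr_gt0.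
  by rewrite mulr1 ltr_pdivrMr // ltr_pMr // ltr1n.
have in_ball s : `|s| <= 1 -> K (x0 + s *: w).
  move=> s1; apply: eK; rewrite ballE opprD addNKr normrN mx_normZ.
  by apply: le_lt_trans w_small; rewrite ler_piMl.
have Kp : K (x0 + w) by rewrite -[w]scale1r; apply: in_ball; rewrite normr1.
have Km : K (x0 + -1 *: w) by apply: in_ball; rewrite normrN normr1.
have dot_yw : dot y (x0 + w - (x0 + -1 *: w)) = y 0 j * e.
  rewrite scaleN1r opprD opprK addrACA subrr add0r -mulr2n -scaler_nat.
  by rewrite dotZr dotC dotZl dot_delta mulrA [2 * _]mulrC divfK ?pnatr_eq0 // mulrC.
rewrite ler_pdivlMr // -[X in _ * X](gtr0_norm e0) -normrM ler_norml -dot_yw.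
by rewrite lerNl -dotNr opprB !dir_width_ge.
Qed.

Lemma dir_width_gt0 y : y != 0 -> 0 < dir_width K y.
Proof.
move=> y0; have [x0 [e [e0 eK]]] := convex_body_ball K_body.
by apply: lt_le_trans (dir_width_ge_ball y e0 eK); rewrite mulr_gt0 ?normr_gt0.
Qed.

End DirectionalWidth.

Lemma le_dir_width (R : realType) (d : nat) (K K' : set 'rV[R]_d) y :
  convex_body K -> convex_body K' -> K `<=` K' -> dir_width K y <= dir_width K' y.
Proof.
move=> K_body K'_body KK'; apply: dir_width_le => // a b Ka Kb.
by apply: dir_width_ge => //; apply: KK'.
Qed.

Section Separation.
Variables (R : realType) (d : nat).
Notation vec := 'rV[R]_d.
Implicit Types (x y z p q : vec) (K : set vec).

Lemma not_closure_gap K p : ~ closure K p ->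
  exists2 e : R, 0 < e & forall x, K x -> e <= `|p - x|.
Proof.
move=> Kp; apply: contrapT => no_gap; apply: Kp => B /nbhs_ballP[e e0 eB].
have [x Kx px] : exists2 x, K x & `|p - x| < e.
  apply: contrapT => no_x; apply: no_gap; exists e => // x Kx.
  by rewrite leNgt; apply/negP => px; apply: no_x; exists x.
by exists x; split => //; apply: eB; rewrite ballE.
Qed.

Lemma nearest_point_ineq K p q x (d0 t : R) : Defs.convex_set K -> K q -> K x ->
  (forall y, K y -> d0 <= dot (y - p) (y - p)) -> 0 < t <= 1 ->
  2 * t * dot (p - q) (x - q) <= dot (q - p) (q - p) - d0 + t ^+ 2 * dot (x - q) (x - q).
Proof.
move=> cvK Kq Kx Kd0 /andP[t_gt0 t_le1].
have Ky : K ((1 - t) *: q + t *: x) by apply: cvK; rewrite ?t_le1 ?ltW.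
have := Kd0 _ Ky.
have -> : (1 - t) *: q + t *: x - p = (q - p) + t *: (x - q).
  by rewrite scalerBl scale1r scalerBr; apply/rowP => k; rewrite !mxE; ring.
by rewrite dotDZ -[p - q]opprB dotNl; lra.
Qed.

Lemma separation_gap K p (B delta : R) : Defs.convex_set K -> K !=set0 ->
  (forall x q, K x -> K q -> dot (x - q) (x - q) <= B) ->
  0 < delta -> (forall x, K x -> delta <= dot (x - p) (x - p)) ->
  exists z c, (forall x, K x -> dot z x <= c) /\ c < dot z p.
Proof.
move=> cvK [x0 Kx0] KB delta0 Kdelta.
pose S := [set dot (x - p) (x - p) | x in K].
have S_lb : has_lbound S by exists delta => _ [x Kx <-]; apply: Kdelta.
have S_neq0 : S !=set0 by exists (dot (x0 - p) (x0 - p)), x0.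
set d0 := inf S.
have Kd0 y : K y -> d0 <= dot (y - p) (y - p) by move=> Ky; apply: ge_inf => //; exists y.
have d0_gt0 : 0 < d0.
  by apply: lt_le_trans delta0 _; apply: lb_le_inf => // _ [x Kx <-]; apply: Kdelta.
have B_ge0 : 0 <= B by apply: le_trans (KB _ _ Kx0 Kx0); rewrite subrr dot0l.
set t := d0 / (d0 + 2 * B).
have t_gt0 : 0 < t by rewrite divr_gt0 //; lra.
have t01 : 0 < t <= 1 by rewrite t_gt0 ler_pdivrMr /=; lra.
have tB : t * B <= d0 / 2.
  rewrite /t mulrAC ler_pdivrMr; last lra.
  by rewrite mulrDr mulrCA -[X in _ <= X + _]mulrA; nra.
have d0_lt : d0 < d0 + t * d0 / 2 by rewrite ltrDl; apply: divr_gt0 => //; apply: mulr_gt0.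
have [_ [q Kq <-] q_near] := inf_lt S_neq0 d0_lt.
exists (p - q), (dot (p - q) p - d0 / 2); split; last first.
  by rewrite ltrBlDr ltrDl; apply: divr_gt0.
move=> x Kx; have := nearest_point_ineq cvK Kq Kx Kd0 t01.
have ttc : t ^+ 2 * dot (x - q) (x - q) <= t * (d0 / 2).
  by rewrite expr2 -mulrA ler_pM2l // (le_trans _ tB) // ler_pM2l // KB.
move=> near_ineq; have xq_le : dot (p - q) (x - q) <= d0 / 2.
  have : 0 <= t * (d0 - 2 * dot (p - q) (x - q)) by lra.
  by rewrite pmulr_rge0 //; lra.
have := Kd0 _ Kq; rewrite -[q - p]opprB dotNl dotNr opprK !dotBr in xq_le *; lra.
Qed.

Lemma separation K p : Defs.convex_set K -> (exists M, forall x, K x -> `|x| <= M) ->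
  K !=set0 -> ~ closure K p -> exists z c, (forall x, K x -> dot z x <= c) /\ c < dot z p.
Proof.
move=> cvK [M KM] K0 Kp; have [e e0 Ke] := not_closure_gap Kp.
apply: (@separation_gap _ _ (d%:R * (M + M) ^+ 2) (e ^+ 2)) => //.
- move=> x q Kx Kq; apply: le_trans (dot_le_sqr_norm _) _.
  have xq_le : `|x - q| <= M + M by apply: le_trans (ler_normB _ _) (lerD (KM _ Kx) (KM _ Kq)).
  by apply: ler_wpM2l => //; rewrite !expr2; apply: ler_pM.
- by rewrite exprn_gt0.
- move=> x Kx; apply: le_trans (sqr_norm_le_dot _); rewrite -normrN opprB !expr2.
  have e_le := Ke _ Kx; by apply: ler_pM; rewrite ?(ltW e0).
Qed.

Lemma separation_body K p : convex_body K -> ~ K p ->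
  exists z c, (forall x, K x -> dot z x <= c) /\ c < dot z p.
Proof.
move=> K_body Kp; have [_ cvK _] := K_body.
apply: separation => //; [exact: convex_body_norm_le | exact: convex_body_neq0 |].
by rewrite -(closure_id K).1 //; apply: convex_body_closed.
Qed.

Lemma bipolar K x : convex_body K -> K 0 -> polar (polar K) x -> K x.
Proof.
move=> K_body K0 KKx; apply: contrapT => Kx.
have [z [c [Kz zx]]] := separation_body K_body Kx.
have c_ge0 : 0 <= c by move: (Kz _ K0); rewrite dot0r.
set m := (c + dot z x) / 2.
have m_gt0 : 0 < m by rewrite divr_gt0 //; lra.
have : polar K (m^-1 *: z).
  move=> a Ka; rewrite dotZr dotC ler_pdivrMl // mulr1.
  by apply: le_trans (Kz _ Ka) _; rewrite /m; lra.
move=> /KKx; rewrite dotZl ler_pdivrMl // mulr1 /m; lra.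
Qed.

End Separation.

Lemma closure_scale_mem (R : realType) (d : nat) (A : set 'rV[R]_d) p (e lam : R) :
  Defs.convex_set A -> 0 < e -> ball 0 e `<=` A -> closure A p -> 0 < lam < 1 ->
  A (lam *: p).
Proof.
move=> cvA e0 eA Ap /andP[lam0 lam1].
set rho := e * (1 - lam) / lam.
have rho0 : 0 < rho by rewrite divr_gt0 // mulr_gt0 // subr_gt0.
have [m [Am pm]] := Ap _ (nbhsx_ballx p _ rho0).
set w := (lam / (1 - lam)) *: (p - m).
have lam_ratio0 : 0 < lam / (1 - lam) by rewrite divr_gt0 // subr_gt0.
have Aw : A w.
  apply: eA; rewrite ballE sub0r normrN mx_normZ gtr0_norm //.
  have -> : e = lam / (1 - lam) * rho.
    by rewrite /rho; field; rewrite subr_eq0 !gt_eqF.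
  by rewrite ltr_pM2l // -ballE.
have -> : lam *: p = (1 - lam) *: w + lam *: m.
  by rewrite /w scalerA mulrC divfK ?subr_eq0 1?eq_sym ?lt_eqF // scalerBr subrK.
by apply: cvA => //; rewrite !ltW.
Qed.

Section DiffPolar.
Variables (R : realType) (d : nat).
Notation vec := 'rV[R]_d.
Implicit Types (x y a b : vec) (K C : set vec).

(* The polar of the central symmetral (K - K) / 2 of K. *)
Definition diff_polar K := [set y | forall a b, K a -> K b -> dot y (a - b) <= 2].

Lemma polar_diff_polar C : origin_symmetric C -> polar C = diff_polar C.
Proof.
move=> C_sym; apply/seteqP; split => y Cy.
  move=> a b Ca Cb; rewrite dotBr !(dotC y) -dotNl.
  by have := Cy _ Ca; have := Cy _ (C_sym _ Cb); lra.
move=> x Cx; have := Cy _ _ Cx (C_sym _ Cx).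
by rewrite opprK -mulr2n -scaler_nat dotZr dotC; lra.
Qed.

Lemma diff_polarN K y : diff_polar K y -> diff_polar K (- y).
Proof. by move=> Ky a b Ka Kb; rewrite dotNl -dotNr opprB; apply: Ky. Qed.

Lemma diff_polar_convex K : Defs.convex_set (diff_polar K).
Proof.
move=> y1 y2 t Ky1 Ky2 /andP[t0 t1] a b Ka Kb.
have := Ky1 _ _ Ka Kb; have := Ky2 _ _ Ka Kb.
rewrite dotDl !dotZl; move: (dot y1 _) (dot y2 _) => u v; nra.
Qed.

Lemma le_diff_polar K K' : K `<=` K' -> diff_polar K' `<=` diff_polar K.
Proof. by move=> KK' y K'y a b Ka Kb; apply: K'y; apply: KK'. Qed.

Lemma diff_polar_closed K : closed (diff_polar K).
Proof.
have -> : diff_polar K = \bigcap_(ab in [set ab | K ab.1 /\ K ab.2])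
                           [set y | dot y (ab.1 - ab.2) <= 2].
  by apply/seteqP; split => [y Ky [a b] [Ka Kb]|y Ky a b Ka Kb]; [apply: Ky | apply: (Ky (a, b))].
apply: closed_bigI => ab _.
apply: (@preimage_closed _ _ (fun y => dot y (ab.1 - ab.2)) [set r | r <= 2]).
  by move=> y _; apply: continuous_dotl.
exact: closed_le.
Qed.

Lemma diff_polarE K y : convex_body K -> diff_polar K y <-> dir_width K y <= 2.
Proof.
move=> K_body; split; first exact: dir_width_le.
by move=> Ky a b Ka Kb; apply: le_trans Ky; apply: dir_width_ge.
Qed.

Lemma seg_in_diff_polar K x : diff_polar K x -> seg_in (diff_polar K) (- x) x.
Proof.
move=> Kx t t01; apply: diff_polar_convex => //; exact: diff_polarN.
Qed.

Lemma dir_width_seg_le K a b : convex_body K -> diff_polar K a -> diff_polar K b ->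
  dir_width K (b - a) <= 4.
Proof.
move=> K_body Ka Kb; apply: dir_width_le => // p q Kp Kq.
rewrite dotBl -dotNr opprB; have := Kb _ _ Kp Kq; have := Ka _ _ Kq Kp; lra.
Qed.

Lemma diff_polar_body K : convex_body K -> convex_body (diff_polar K).
Proof.
move=> K_body; have [M KM] := convex_body_norm_le K_body.
have [x0 [e [e0 eK]]] := convex_body_ball K_body.
have M0 : 0 <= M by have [a /KM] := convex_body_neq0 K_body; apply: le_trans.
split; last exists 0; [|exact: diff_polar_convex|].
- apply: bounded_closed_compact; last exact: diff_polar_closed.
  apply: (@norm_le_bounded _ _ _ (2 / e)) => y /(diff_polarE _ K_body) Ky.
  by rewrite ler_pdivlMr // mulrC; apply: le_trans Ky; apply: dir_width_ge_ball eK.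
- have dM : 0 <= d%:R * (M + M) by apply: mulr_ge0 => //; apply: addr_ge0.
  apply/nbhs_ballP; exists (1 / (d%:R * (M + M) + 1)); first by apply: divr_gt0 => //; lra.
  move=> y; rewrite ballE sub0r normrN => y_small a b Ka Kb.
  apply: le_trans (ler_norm _) (le_trans (norm_dot_le _ _) _).
  have ab : `|a - b| <= M + M by apply: le_trans (ler_normB _ _) (lerD (KM _ Ka) (KM _ Kb)).
  apply: le_trans (_ : d%:R * (1 / (d%:R * (M + M) + 1) * (M + M)) <= 2).
    by apply: ler_wpM2l => //; apply: ler_pM => //; apply: ltW.
  have -> : d%:R * (1 / (d%:R * (M + M) + 1) * (M + M)) = d%:R * (M + M) / (d%:R * (M + M) + 1).
    by ring.
  rewrite ler_pdivrMr; lra.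
Qed.

End DiffPolar.

Section DifferenceSet.
Variables (R : realType) (d : nat).
Notation vec := 'rV[R]_d.
Implicit Types (x y a b : vec) (K : set vec).

Definition diff_set K := [set a - b | a in K & b in K].

Lemma diff_set_convex K : Defs.convex_set K -> Defs.convex_set (diff_set K).
Proof.
move=> cvK _ _ t [a1 Ka1 [b1 Kb1 <-]] [a2 Ka2 [b2 Kb2 <-]] t01.
exists ((1 - t) *: a1 + t *: a2); first exact: cvK.
exists ((1 - t) *: b1 + t *: b2); first exact: cvK.
by rewrite !scalerBr addrACA opprD.
Qed.

Lemma diff_set_norm_le K (M : R) : (forall x, K x -> `|x| <= M) ->
  forall x, diff_set K x -> `|x| <= M + M.
Proof.
by move=> KM _ [a Ka [b Kb <-]]; apply: le_trans (ler_normB _ _) (lerD (KM _ Ka) (KM _ Kb)).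
Qed.

Lemma diff_set_ball K x0 (e : R) : ball x0 e `<=` K -> ball 0 e `<=` diff_set K.
Proof.
move=> eK x; rewrite ballE sub0r normrN => xe.
exists (x0 + x); first by apply: eK; rewrite ballE opprD addNKr normrN.
by exists x0; [apply: eK; apply: ballxx; apply: le_lt_trans xe | rewrite addrC addKr].
Qed.

Lemma dir_width_diff_polar_gt K z s : convex_body K -> 0 < s ->
  ~ closure (diff_set K) (s *: z) -> 4 / s < dir_width (diff_polar K) z.
Proof.
move=> K_body s_gt0 szK; have [_ cvK _] := K_body; have [M KM] := convex_body_norm_le K_body.
have [x0 [e [e0 eK]]] := convex_body_ball K_body.
have dK0 : diff_set K 0 by apply: diff_set_ball eK _ (ballxx _ e0).
have [z' [c [Kc cz]]] := separation (diff_set_convex cvK)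
  (ex_intro _ _ (diff_set_norm_le KM)) (ex_intro _ _ dK0) szK.
have c_ge0 : 0 <= c by move: (Kc _ dK0); rewrite dot0r.
set c' := (c + dot z' (s *: z)) / 2.
have c'_gt0 : 0 < c' by rewrite /c'; lra.
have Ky : diff_polar K ((2 / c') *: z').
  move=> a b Ka Kb; rewrite dotZl mulrAC ler_pdivrMr // ler_pM2l //.
  have : diff_set K (a - b) by exists a => //; exists b.
  by move=> /Kc; rewrite /c'; lra.
apply: lt_le_trans (dir_width_ge (diff_polar_body K_body) z Ky (diff_polarN Ky)).
have -> : (2 / c') *: z' - - ((2 / c') *: z') = (4 / c') *: z'.
  by rewrite opprK -mulr2n -scaler_nat scalerA mulrA -natrM.
have c'_lt : c' < s * dot z z' by rewrite -dotZl dotC /c'; lra.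
rewrite dotZr ltr_pdivrMr // (_ : _ * s = 4 * (s * dot z z') / c'); last by ring.
by rewrite ltr_pdivlMr // ltr_pM2l.
Qed.

End DifferenceSet.

Section DiscreteSubgroup.
Variables (R : realType) (d : nat).
Notation vec := 'rV[R]_d.
Implicit Types (x y z a b u v : vec) (G L K : set vec).

Definition lattice_lengths G K :=
  [set l | exists a b, [/\ seg_in K a b, lattice_segment G a b & lattice_length G a b l]].

Definition discrete_subgroup G : Prop :=
  [/\ G 0, (forall x y, G x -> G y -> G (x - y))
    & exists2 r : R, 0 < r & forall x, G x -> `|x| < r -> x = 0].

Lemma dual_coord_eq0 L j : is_lattice L ->
  exists2 r : R, 0 < r & forall z, dual L z -> `|z| < r -> z 0 j = 0.
Proof.
case=> _ _ _ /(_ (delta_mx 0 j)) [n [c [v [Lv def_e]]]].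
set B := \sum_(i < n) `|v i|.
have B0 : 0 <= B by apply: sumr_ge0.
have dB0 : 0 <= d%:R * B by apply: mulr_ge0.
exists (1 / (d%:R * B + 1)); first by apply: divr_gt0 => //; lra.
move=> z Lz z_small; rewrite -dot_delta def_e dot_suml big1 // => i _.
have vz0 : dot (v i) z = 0.
  suff vz_small : `|dot (v i) z| < 1.
    apply/eqP; apply: contraLR vz_small => vz_neq0.
    by rewrite -leNgt norm_intr_ge1 ?Lz.
  apply: le_lt_trans (norm_dot_le _ _) _.
  have vB : `|v i| <= B by rewrite /B (bigD1 i) //= lerDl sumr_ge0.
  apply: le_lt_trans (_ : d%:R * (B * (1 / (d%:R * B + 1))) < 1).
    by apply: ler_wpM2l => //; apply: ler_pM => //; apply: ltW.
  rewrite mulrA mulrC mul1r ltr_pdivrMl; lra.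
by rewrite dotZl vz0 mulr0.
Qed.

Lemma lattice_dual_discrete L : is_lattice L -> discrete_subgroup (dual L).
Proof.
move=> L_lattice; split.
- by move=> x _; rewrite dot0r.
- by move=> y z Ly Lz x Lx; rewrite dotBr rpredB ?Ly ?Lz.
have [r r0 rz] := fin_all_exists2 (fun j => dual_coord_eq0 j L_lattice).
exists (\big[Num.min/1]_j r j); first by apply/bigmin_gtP; split.
move=> z Lz z_small; apply/rowP => j; rewrite mxE rz //.
by apply: lt_le_trans z_small (bigmin_le _ _ _).
Qed.

Lemma lattice_length_vec G a b l : lattice_segment G a b -> lattice_length G a b l ->
  0 < l /\ exists v, [/\ G v, v != 0 & b - a = l *: v].
Proof.
move=> [ab _] [v [[Gv [s [s_gt0 vs]] _] ->]].
have ba0 : b - a != 0 by rewrite subr_eq0 eq_sym.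
have e_gt0 := enorm_gt0 ba0.
rewrite vs enormZ gtr0_norm //; split; first by rewrite divr_gt0 ?mulr_gt0.
exists v; split => //; first by rewrite vs scaler_eq0 negb_or gt_eqF.
rewrite vs scalerA (_ : _ * s = 1) ?scale1r //.
by rewrite invfM mulrCA mulfV ?gt_eqF // mulr1 mulVf ?gt_eqF.
Qed.


Section SubgroupLine.
Variable G : set vec.
Hypothesis G_discrete : discrete_subgroup G.

Lemma subgroupMz x (k : int) : G x -> G (k%:~R *: x).
Proof.
case: G_discrete => G0 GB _ Gx.
have GN y : G y -> G (- y) by move=> Gy; rewrite -sub0r; apply: GB.
have Gn (n : nat) : G (n%:R *: x).
  elim: n => [|n IH]; first by rewrite scale0r.
  by rewrite -natr1 scalerDl scale1r -[x in _ + x]opprK; apply: GB => //; apply: GN.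
by case: k => n; [exact: Gn | rewrite NegzE intrN scaleNr; apply: GN; exact: Gn].
Qed.

Lemma discrete_line_min z : G z -> z != 0 ->
  exists2 t0 : R, G (t0 *: z) & 0 < t0 /\ forall t, 0 < t -> G (t *: z) -> t0 <= t.
Proof.
move=> Gz z0; case: G_discrete => G0 GB [r r0 Gr].
set tau := r / `|z|.
have tau_gt0 : 0 < tau by rewrite divr_gt0 ?normr_gt0.
have tau_le t : 0 < t -> G (t *: z) -> tau <= t.
  move=> t_gt0 Gt; rewrite leNgt; apply/negP => t_small.
  have /eqP : t *: z = 0.
    by apply: Gr => //; rewrite mx_normZ gtr0_norm // -ltr_pdivlMr ?normr_gt0.
  by rewrite scaler_eq0 (negbTE z0) orbF gt_eqF.
set T := [set t | 0 < t /\ G (t *: z)].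
have T_neq0 : T !=set0 by exists 1; split; rewrite ?ltr01 ?scale1r.
have T_lb : has_lbound T by exists tau => t [t_gt0 Gt]; apply: tau_le.
have T_ge_inf t : T t -> inf T <= t by apply: ge_inf.
have tau_le_inf : tau <= inf T by apply: lb_le_inf => // t [t_gt0 Gt]; apply: tau_le.
exists (inf T); last by split=> [|t t_gt0 Gt]; [lra | apply: T_ge_inf].
apply: contrapT => G_inf.
have inf_lt_tau : inf T < inf T + tau by rewrite ltrDl.
have [t1 Tt1 t1_lt] := inf_lt T_neq0 inf_lt_tau.
have inf_lt1 : inf T < t1.
  rewrite lt_neqAle T_ge_inf // andbT; apply/eqP => t1E.
  by apply: G_inf; rewrite t1E; case: Tt1.
have [t2 Tt2 t2_lt] := inf_lt T_neq0 inf_lt1.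
have : tau <= t1 - t2.
  by apply: tau_le; rewrite ?subr_gt0 // scalerBl; apply: GB; [case: Tt1 | case: Tt2].
have := T_ge_inf _ Tt2; lra.
Qed.

Lemma discrete_line_cyclic z : G z -> z != 0 -> exists2 t0 : R, 0 < t0 /\ G (t0 *: z) &
  forall t, G (t *: z) -> exists m : int, t = m%:~R * t0.
Proof.
move=> Gz z0; have [t0 Gt0 [t0_gt0 t0_min]] := discrete_line_min Gz z0.
exists t0 => // t Gt; exists (Num.floor (t / t0)).
have /andP[fl_le fl_gt] := floor_itv (t / t0).
set m := Num.floor (t / t0) in fl_le fl_gt *.
rewrite ler_pdivlMr // in fl_le.
rewrite intrD ltr_pdivrMr // mulrDl mul1r in fl_gt.
have G_rem : G ((t - m%:~R * t0) *: z).
  case: G_discrete => _ GB _; rewrite scalerBl -scalerA.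
  by apply: GB => //; apply: subgroupMz.
have [rem_gt0|] := ltP 0 (t - m%:~R * t0); last lra.
by have := t0_min _ rem_gt0 G_rem; lra.
Qed.

Lemma lattice_length_ge a b z s : G z -> z != 0 -> 0 < s -> b - a = s *: z ->
  lattice_segment G a b /\ exists2 l, s <= l & lattice_length G a b l.
Proof.
move=> Gz z0 s_gt0 ab.
have [t0 [t0_gt0 Gt0] t0_gen] := discrete_line_cyclic Gz z0.
have t0_le1 : t0 <= 1.
  have [k k1] : exists k : int, 1 = k%:~R * t0 by apply: t0_gen; rewrite scale1r.
  have k_gt0 : 0 < k%:~R :> R by rewrite -(pmulr_lgt0 _ t0_gt0) -k1.
  apply: le_trans (_ : t0 <= k%:~R * t0) _; last by rewrite -k1.
  by rewrite ler_pMl // ler1z -gtz0_ge1 -(ltr0z R).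
have ab_neq0 : b - a != 0 by rewrite ab scaler_eq0 negb_or gt_eqF.
split.
  split; last by exists z; split => //; exists s.
  by apply: contraNneq ab_neq0 => ->; rewrite subrr.
exists (s / t0); first by rewrite ler_pdivlMr // ger_pMr.
exists (t0 *: z); split.
  split => //; first by exists (t0 / s); rewrite divr_gt0 // ab scalerA divfK ?gt_eqF.
  move=> w Gw [t wt].
  have [m tm] : exists m : int, t * s = m%:~R * t0 by apply: t0_gen; rewrite -scalerA -ab -wt.
  by exists m; rewrite wt ab scalerA tm scalerA.
by rewrite ab !enormZ !gtr0_norm // [t0 * _]mulrC invfM mulrA mulfK // gt_eqF // enorm_gt0.
Qed.

Lemma lattice_lengths_ubound K : (exists M, forall x, K x -> `|x| <= M) ->
  has_ubound (lattice_lengths G K).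
Proof.
move=> [M KM]; case: G_discrete => _ _ [r r0 Gr].
exists ((M + M) / r) => l [a [b [Kab Gab lab]]].
have [Ka Kb] := seg_in_ends Kab.
have [l_gt0 [v [Gv v0 ab]]] := lattice_length_vec Gab lab.
have r_le : r <= `|v|.
  by rewrite leNgt; apply: contra v0 => /(Gr _ Gv) ->.
rewrite ler_pdivlMr //; apply: le_trans (ler_wpM2l (ltW l_gt0) r_le) _.
have := le_trans (ler_normB _ _) (lerD (KM _ Kb) (KM _ Ka)).
by rewrite ab mx_normZ gtr0_norm.
Qed.

Lemma lattice_diam_ge0 K : (exists M, forall x, K x -> `|x| <= M) -> 0 <= lattice_diam G K.
Proof.
move=> K_bnd; have [[l Kl]|no_l] := pselect (lattice_lengths G K !=set0).
  have [a [b [_ Gab lab]]] := Kl; have [l_gt0 _] := lattice_length_vec Gab lab.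
  exact: le_trans (ltW l_gt0) (ub_le_sup (lattice_lengths_ubound K_bnd) Kl).
rewrite /lattice_diam -/(lattice_lengths G K) (_ : lattice_lengths G K = set0) ?sup0 //.
by apply/seteqP; split => // l Kl; apply: no_l; exists l.
Qed.

End SubgroupLine.

End DiscreteSubgroup.

Section WidthDiameter.
Variables (R : realType) (d : nat).
Notation vec := 'rV[R]_d.
Implicit Types (x y z a b : vec) (K C : set vec).
Variable L : set vec.
Hypothesis L_lattice : is_lattice L.

Let dual_discrete := lattice_dual_discrete L_lattice.

Lemma lattice_width_le K z : convex_body K -> dual L z -> z != 0 ->
  lattice_width L K <= dir_width K z.
Proof.
move=> K_body Lz z0; apply: ge_inf; last by exists z.
by exists 0 => _ [y [_ _ ->]]; apply: dir_width_ge0.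
Qed.

Lemma lattice_width_ge K (c : R) : (exists2 z, dual L z & z != 0) ->
  (forall z, dual L z -> z != 0 -> c <= dir_width K z) -> c <= lattice_width L K.
Proof.
move=> [z Lz z0] cK; apply: lb_le_inf; first by exists (dir_width K z), z.
by move=> _ [y [Ly y0 ->]]; apply: cK.
Qed.

Lemma lattice_width_gt0 K : convex_body K -> (exists2 z, dual L z & z != 0) ->
  0 < lattice_width L K.
Proof.
move=> K_body L_nontriv; have [x0 [e [e0 eK]]] := convex_body_ball K_body.
case: dual_discrete => _ _ [r r0 Lr].
apply: lt_le_trans (lattice_width_ge (c := e * r) L_nontriv _); first exact: mulr_gt0.
move=> z Lz z0; apply: le_trans (dir_width_ge_ball K_body z e0 eK).
by rewrite ler_pM2l // leNgt; apply: contra z0 => /(Lr _ Lz) ->.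
Qed.

Lemma lattice_width_trivial K : ~ (exists2 z, dual L z & z != 0) -> lattice_width L K = 0.
Proof.
move=> L_triv; rewrite /lattice_width (_ : [set w | _] = set0) ?inf0 //.
by apply/seteqP; split => // w [y [Ly y0 _]]; apply: L_triv; exists y.
Qed.

Lemma lattice_diam_trivial K : ~ (exists2 z, dual L z & z != 0) ->
  lattice_diam (dual L) K = 0.
Proof.
move=> L_triv; rewrite /lattice_diam (_ : [set l | _] = set0) ?sup0 //.
by apply/seteqP; split => // l [a [b [_ [_ [v [Lv v0 _]]] _]]]; apply: L_triv; exists v.
Qed.

Lemma le_lattice_width K K' : convex_body K -> convex_body K' -> K `<=` K' ->
  lattice_width L K <= lattice_width L K'.
Proof.
move=> K_body K'_body KK'.
have [L_nontriv|L_triv] := pselect (exists2 z, dual L z & z != 0).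
  apply: lattice_width_ge => // z Lz z0.
  by apply: le_trans (lattice_width_le K_body Lz z0) (le_dir_width _ K_body K'_body KK').
by rewrite !lattice_width_trivial.
Qed.

Lemma lattice_length_diff_polar_le K l : convex_body K ->
  lattice_lengths (dual L) (diff_polar K) l -> l <= 4 / lattice_width L K.
Proof.
move=> K_body [a [b [Kab Lab lab]]].
have [l_gt0 [v [Lv v0 ab]]] := lattice_length_vec Lab lab.
have [Ka Kb] := seg_in_ends Kab.
have w_gt0 : 0 < lattice_width L K by apply: lattice_width_gt0 => //; exists v.
have lW : l * dir_width K v <= 4.
  by have := dir_widthZ K_body l v; rewrite gtr0_norm // -ab => <-; apply: dir_width_seg_le.
rewrite ler_pdivlMr //; apply: le_trans lW; rewrite ler_pM2l //.
exact: lattice_width_le.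
Qed.

Lemma lattice_length_diff_polar_ge K z : convex_body K -> dual L z -> z != 0 ->
  exists2 l, lattice_lengths (dual L) (diff_polar K) l & 4 / dir_width K z <= l.
Proof.
move=> K_body Lz z0; set W := dir_width K z.
have W_gt0 : 0 < W := dir_width_gt0 K_body z0.
set x := (2 / W) *: z.
have Kx : diff_polar K x.
  have c_gt0 : 0 < 2 / W by apply: divr_gt0.
  by apply/diff_polarE => //; rewrite dir_widthZ // (gtr0_norm c_gt0) -/W divfK ?gt_eqF.
have x2 : x - - x = (4 / W) *: z.
  by rewrite opprK -mulr2n -scaler_nat /x scalerA mulrA -natrM.
have s_gt0 : 0 < 4 / W by apply: divr_gt0.
have [Lseg [l l_ge len_l]] := lattice_length_ge dual_discrete Lz z0 s_gt0 x2.
by exists l => //; exists (- x), x; split => //; apply: seg_in_diff_polar.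
Qed.

(* When the dual lattice is trivial both sides are 0: [sup set0 = 0] and [x / 0 = 0]. *)
Lemma lattice_diam_diff_polar K : convex_body K ->
  lattice_diam (dual L) (diff_polar K) = 4 / lattice_width L K.
Proof.
move=> K_body; have [L_nontriv|L_triv] := pselect (exists2 z, dual L z & z != 0); last first.
  by rewrite lattice_width_trivial // lattice_diam_trivial // invr0 mulr0.
have w_gt0 := lattice_width_gt0 K_body L_nontriv.
have [z Lz z0] := L_nontriv.
have [l0 l0_len l0_ge] := lattice_length_diff_polar_ge K_body Lz z0.
have lengths_le := lattice_length_diff_polar_le K_body.
rewrite /lattice_diam -/(lattice_lengths _ _); set D := sup _.
have D_ub : ubound (lattice_lengths (dual L) (diff_polar K)) D.
  by apply: ub_le_sup; exists (4 / lattice_width L K).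
apply/eqP; rewrite eq_le; apply/andP; split; first by apply: ge_sup; [exists l0|].
have D_gt0 : 0 < D.
  apply: lt_le_trans (le_trans l0_ge (D_ub _ l0_len)).
  by rewrite divr_gt0 // dir_width_gt0.
rewrite ler_pdivrMr // mulrC -ler_pdivrMr //.
apply: lattice_width_ge => // y Ly y0.
have [l l_len l_ge] := lattice_length_diff_polar_ge K_body Ly y0.
have W_gt0 := dir_width_gt0 K_body y0.
rewrite ler_pdivrMr // mulrC -ler_pdivrMr //.
exact: le_trans l_ge (D_ub _ l_len).
Qed.

Lemma closure_diff_set_le_diam K z s : convex_body K -> dual L z -> z != 0 -> 0 < s ->
  closure (diff_set K) (s *: z) -> s <= lattice_diam (dual L) K.
Proof.
move=> K_body Lz z0 s_gt0 szK; rewrite leNgt; apply/negP => Ds.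
have [_ cvK _] := K_body; have [M KM] := convex_body_norm_le K_body.
have [x0 [e [e0 eK]]] := convex_body_ball K_body.
have D_ge0 := lattice_diam_ge0 dual_discrete (ex_intro _ M KM).
set s1 := (lattice_diam (dual L) K + s) / 2.
have s1_gt0 : 0 < s1 by rewrite /s1; lra.
have lam01 : 0 < s1 / s < 1 by rewrite divr_gt0 //= ltr_pdivrMr // mul1r /s1; lra.
have := closure_scale_mem (diff_set_convex cvK) e0 (diff_set_ball eK) szK lam01.
rewrite scalerA divfK ?gt_eqF // => -[a Ka [b Kb ab]].
have [Lseg [l s1_le len_l]] := lattice_length_ge dual_discrete Lz z0 s1_gt0 ab.
have l_le : l <= lattice_diam (dual L) K.
  apply: (ub_le_sup (lattice_lengths_ubound dual_discrete (ex_intro _ M KM))).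
  by exists b, a; split => // t t01; apply: cvK.
by move: s1_le l_le; rewrite /s1; lra.
Qed.

Lemma lattice_width_diff_polar_ge K : convex_body K ->
  4 / lattice_diam (dual L) K <= lattice_width L (diff_polar K).
Proof.
move=> K_body; have [L_nontriv|L_triv] := pselect (exists2 z, dual L z & z != 0); last first.
  by rewrite lattice_diam_trivial // invr0 mulr0 lattice_width_trivial.
have P_body := diff_polar_body K_body.
have [M KM] := convex_body_norm_le K_body.
have := lattice_diam_ge0 dual_discrete (ex_intro _ M KM).
rewrite le_eqVlt => /orP[/eqP <-|D_gt0].
  by rewrite invr0 mulr0 ltW // lattice_width_gt0.
apply: lattice_width_ge => // z Lz z0.
set W := dir_width (diff_polar K) z; have W_gt0 : 0 < W := dir_width_gt0 P_body z0.
rewrite leNgt; apply/negP => W_lt.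
have s_gt0 : 0 < 4 / W by apply: divr_gt0.
have szK : ~ closure (diff_set K) ((4 / W) *: z).
  move/(closure_diff_set_le_diam K_body Lz z0 s_gt0); apply/negP; rewrite -ltNge.
  by rewrite ltr_pdivlMr // mulrC -ltr_pdivlMr.
have := dir_width_diff_polar_gt K_body s_gt0 szK.
by rewrite -/W invf_div mulrCA mulfV ?pnatr_eq0 // mulr1 ltxx.
Qed.

End WidthDiameter.

Section PolarDuality.
Variables (R : realType) (d : nat).
Notation vec := 'rV[R]_d.
Implicit Types (x y z a b p : vec) (K C : set vec).

Lemma proper_subset_point K K' : K `<=` K' -> K != K' -> exists2 p, K' p & ~ K p.
Proof.
move=> KK' /eqP KK'_neq; apply: contrapT => no_p; apply: KK'_neq.
by apply/seteqP; split => // p K'p; apply: contrapT => Kp; apply: no_p; exists p.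
Qed.

Lemma dir_width_lt_proper K C : convex_body K -> convex_body C -> K `<=` C -> K != C ->
  exists2 z, z != 0 & dir_width K z < dir_width C z.
Proof.
move=> K_body C_body KC KC_neq; have [p Cp Kp] := proper_subset_point KC KC_neq.
have [z [c [Kz zp]]] := separation_body K_body Kp.
have [u Ku] := convex_body_neq0 K_body.
exists z.
  by apply/eqP => z0; move: zp (Kz _ Ku); rewrite z0 (dot0l p) (dot0l u); lra.
apply: le_lt_trans (_ : dir_width K z <= dir_width C z - (dot z p - c)) _; last first.
  by rewrite ltrBlDr ltrDl subr_gt0.
apply: dir_width_le => // a b Ka Kb.
have := dir_width_ge C_body z Cp (KC _ Kb); rewrite !dotBr; have := Kz _ Ka; lra.
Qed.

Lemma diff_polar_proper K C : convex_body K -> convex_body C -> K `<=` C -> K != C ->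
  diff_polar C != diff_polar K.
Proof.
move=> K_body C_body KC KC_neq; have [z z0 lt_wz] := dir_width_lt_proper K_body C_body KC KC_neq.
have W_gt0 := dir_width_gt0 K_body z0.
have c_gt0 : 0 < 2 / dir_width K z by apply: divr_gt0.
have Ky : diff_polar K ((2 / dir_width K z) *: z).
  by apply/diff_polarE => //; rewrite dir_widthZ // (gtr0_norm c_gt0) divfK ?gt_eqF.
apply/eqP => PCK; rewrite -PCK in Ky; move/(diff_polarE _ C_body): Ky.
by rewrite dir_widthZ // (gtr0_norm c_gt0) mulrAC ler_pdivrMr // ler_pM2l // leNgt lt_wz.
Qed.

Lemma origin_symmetric_body0 C : convex_body C -> origin_symmetric C -> C 0.
Proof.
move=> C_body C_sym; have [_ cvC _] := C_body; have [a Ca] := convex_body_neq0 C_body.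
have half01 : 0 <= (2^-1 : R) <= 1 by rewrite invr_ge0 ler0n invf_le1 ?ler1n.
have := cvC _ _ _ Ca (C_sym _ Ca) half01.
by rewrite (_ : _ + _ = 0) //; apply/rowP => k; rewrite !mxE; field.
Qed.

Section SymmetricBody.
Variable C : set vec.
Hypotheses (C_body : convex_body C) (C_sym : origin_symmetric C).

Let polarC := polar_diff_polar C_sym.
Let polarC_body : convex_body (polar C).
Proof. by rewrite polarC; apply: diff_polar_body. Qed.
Let polarN y : polar C y -> polar C (- y).
Proof. by rewrite polarC; apply: diff_polarN. Qed.

Lemma diff_polar_sub K : polar C `<=` K -> diff_polar K `<=` C.
Proof.
move=> CK x Kx; apply: bipolar => //; first exact: origin_symmetric_body0.
move=> y Cy; have := Kx _ _ (CK _ Cy) (CK _ (polarN Cy)).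
by rewrite opprK -mulr2n -scaler_nat dotZr dotC; lra.
Qed.

Lemma diff_polar_neq K : polar C `<=` K -> polar C != K -> diff_polar K != C.
Proof.
move=> CK CK_neq; have [p Kp Cp] := proper_subset_point CK CK_neq.
have [x1 Cx1 x1p] : exists2 x1, C x1 & 1 < dot x1 p.
  apply: contrapT => no_x1; apply: Cp => x Cx.
  by rewrite leNgt; apply/negP => xp; apply: no_x1; exists x.
have x1_0 : x1 != 0 by apply: contraTneq x1p => ->; rewrite (dot0l p) -leNgt ler01.
(* (2 / W) *: x1 lies on the boundary of C; pairing p with points of C* that are nearly
   extremal in direction x1 shows that it is not in diff_polar K. *)
set W := dir_width (polar C) x1.
have W_gt0 : 0 < W := dir_width_gt0 polarC_body x1_0.
have W_le2 : W <= 2.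
  apply: dir_width_le => // q1 q2 Cq1 Cq2.
  by rewrite dotBr -dotNr; have := Cq1 _ Cx1; have := polarN Cq2 Cx1; lra.
have scaleW v : dot ((2 / W) *: x1) v <= 2 -> dot x1 v <= W.
  by rewrite dotZl mulrAC ler_pdivrMr // ler_pM2l.
have Cx : C ((2 / W) *: x1).
  apply: bipolar C_body (origin_symmetric_body0 C_body C_sym) _ => y Cy.
  rewrite dotZr mulrAC ler_pdivrMr // mul1r.
  have := dir_width_ge polarC_body x1 Cy (polarN Cy).
  by rewrite opprK -mulr2n -scaler_nat dotZr dotC.
apply/eqP => KC; rewrite -KC in Cx.
have [q1 [q2 [Cq1 Cq2 q12]]] : exists q1 q2, [/\ polar C q1, polar C q2 &
    W - (2 * dot x1 p - W) < dot x1 (q1 - q2)].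
  by apply: dir_width_gt => //; rewrite -/W; lra.
have := scaleW _ (Cx _ _ Kp (CK _ (polarN Cq1))).
have := scaleW _ (Cx _ _ Kp (CK _ Cq2)).
by rewrite opprK !dotBr dotDr; move: q12; rewrite dotBr; lra.
Qed.

End SymmetricBody.

End PolarDuality.

Section LatticeDuality.
Variables (R : realType) (d : nat).
Notation vec := 'rV[R]_d.
Variables (L C : set vec).
Hypotheses (L_lattice : is_lattice L) (C_body : convex_body C) (C_sym : origin_symmetric C).

Let polarC := polar_diff_polar C_sym.

Lemma width_direction_diam_direction y :
  width_direction L C y <-> diam_direction (dual L) (polar C) y.
Proof.
rewrite /diam_direction polarC lattice_diam_diff_polar //; split.
  move=> [Ly y0 Wy]; split => //.
  have w_gt0 : 0 < lattice_width L C by apply: lattice_width_gt0 => //; exists y.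
  have c_gt0 : 0 < 2 / lattice_width L C by apply: divr_gt0.
  set x := (2 / lattice_width L C) *: y; exists (- x).
  have -> : - x + 4 / lattice_width L C *: y = x.
    by rewrite /x -scaleNr -scalerDl -mulNr -mulrDl (_ : - 2 + 4 = 2 :> R) //; lra.
  apply: seg_in_diff_polar; apply/diff_polarE => //.
  by rewrite dir_widthZ // (gtr0_norm c_gt0) Wy divfK ?gt_eqF.
move=> [Ly y0 [a ay]]; split => //.
have w_gt0 : 0 < lattice_width L C by apply: lattice_width_gt0 => //; exists y.
have D_gt0 : 0 < 4 / lattice_width L C by apply: divr_gt0.
apply/eqP; rewrite eq_le lattice_width_le // andbT.
have [Pa Pb] := seg_in_ends ay.
have := dir_width_seg_le C_body Pa Pb.
by rewrite addrC addKr dir_widthZ // (gtr0_norm D_gt0) mulrAC ler_pdivrMr // ler_pM2l.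
Qed.

Lemma lattice_reduced_complete :
  lattice_reduced L C <-> lattice_complete (dual L) (polar C).
Proof.
split.
  move=> C_red [K [K_body CK CK_neq dK]]; apply: C_red.
  have PK_body := diff_polar_body K_body.
  have PKC := diff_polar_sub C_body C_sym CK.
  exists (diff_polar K); split => //; first by apply: diff_polar_neq; rewrite // eq_sym.
  apply/eqP; rewrite eq_le le_lattice_width //=.
  have := lattice_width_diff_polar_ge L_lattice K_body.
  by rewrite dK polarC lattice_diam_diff_polar // invf_div mulrCA mulfV ?pnatr_eq0 // mulr1.
move=> C_compl [K [K_body KC KC_neq wK]]; apply: C_compl.
exists (diff_polar K); split; first exact: diff_polar_body.
- by rewrite polarC; apply: le_diff_polar.
- by rewrite polarC eq_sym; apply: diff_polar_proper.
by rewrite polarC !lattice_diam_diff_polar // wK.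
Qed.

End LatticeDuality.

Section Polytope.
Variables (R : realType) (d n : nat) (v : 'I_n -> 'rV[R]_d).

Definition simplex := [set lam : 'rV[R]_n | (forall i, 0 <= lam 0 i) /\ \sum_i lam 0 i = 1].

Definition hull_map (lam : 'rV[R]_n) : 'rV[R]_d := \sum_i lam 0 i *: v i.

Lemma continuous_hull_map : continuous hull_map.
Proof.
apply: continuous_big => [|i _ lam]; first exact: add_continuous.
exact: (continuous_comp (@coord_continuous _ _ _ 0 i lam) (@scalel_continuous _ _ (v i) _)).
Qed.

Lemma simplex_compact : compact simplex.
Proof.
apply: bounded_closed_compact.
  apply: (@norm_le_bounded _ _ _ 1) => lam [lam_ge0 lam1]; apply: norm_le_coord => // j.
  by rewrite ger0_norm // -lam1 (bigD1 j) //= lerDl sumr_ge0.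
have -> : simplex = \bigcap_i [set lam | 0 <= lam 0 i] `&`
                    (fun lam => \sum_i lam 0 i) @^-1` [set 1].
  apply/seteqP; split => lam [lam_ge0 lam1]; split => //.
    by move=> i _; apply: lam_ge0.
  by move=> i; apply: lam_ge0.
apply: closedI.
  apply: closed_bigI => i _.
  apply: (@preimage_closed _ _ (fun lam : 'rV[R]_n => lam 0 i) [set x | 0 <= x]).
    by move=> lam _; apply: coord_continuous.
  exact: closed_ge.
apply: (@preimage_closed _ _ (fun lam : 'rV[R]_n => \sum_i lam 0 i) [set 1]).
  move=> lam _; apply: continuous_big => [|i _ mu]; first exact: add_continuous.
  exact: coord_continuous.
exact: closed_eq.
Qed.

End Polytope.

Lemma polytope_convex_body (R : realType) (d : nat) (C : set 'rV[R]_d) :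
  full_polytope C -> convex_body C.
Proof.
move=> [[n [v ->]] C_int]; split => //.
- rewrite (_ : [set x | _] = hull_map v @` @simplex R n).
    apply: continuous_compact; last exact: simplex_compact.
    exact/continuous_subspaceT/continuous_hull_map.
  apply/seteqP; split => [x [lam [lam_ge0 lam1 ->]]|_ [lam [lam_ge0 lam1] <-]].
    exists (\row_i lam i); last by apply: eq_bigr => i _; rewrite mxE.
    by split => [i|]; rewrite ?mxE // -lam1; apply: eq_bigr => i _; rewrite mxE.
  by exists (fun i => lam 0 i).
- move=> _ _ t [la [la_ge0 la1 ->]] [lb [lb_ge0 lb1 ->]] /andP[t0 t1].
  exists (fun i => (1 - t) * la i + t * lb i); split.
  + by move=> i; apply: addr_ge0; apply: mulr_ge0 => //; lra.
  + by rewrite big_split /= -!mulr_sumr la1 lb1; ring.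
  + rewrite !scaler_sumr -big_split /=; apply: eq_bigr => i _.
    by rewrite !scalerA scalerDl.
Qed.

Theorem theorem3p8 (R : realType) (d : nat) (C L : set 'rV[R]_d) :
  full_polytope C -> origin_symmetric C -> is_lattice L ->
  (forall y, width_direction L C y <-> diam_direction (dual L) (polar C) y) /\
  (lattice_reduced L C <-> lattice_complete (dual L) (polar C)).
Proof.
move=> C_poly C_sym L_lattice; have C_body := polytope_convex_body C_poly.
by split; [exact: width_direction_diam_direction | exact: lattice_reduced_complete].
Qed.
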